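(* Let $\theta$ be a congruence of a fuzzy automaton $\mathcal F=(A,X,f)$. Then for each $i\in\{1,2,3\}$, $D_i(\mathcal F)\subseteq D_i(\mathcal F/\theta)$, and if $\mathcal F$ is D$i$-directable, then so is $\mathcal F/\theta$.
   Context: A fuzzy automaton is a triple $\mathcal F=(A,X,f)$ with $A$ a finite nonempty set of states, $X$ a finite nonempty alphabet, and $f:A\times X\times A\to[0,1]$, extended to words by $f^*(a,\varepsilon,a)=1$, $f^*(a,\varepsilon,b)=0$ ($b\neq a$), $f^*(a,vx,b)=\max_{c\in A}\min\{f^*(a,v,c),f(c,x,b)\}$. Let $\mathcal F(a,w)=\{b\in A\mid f^*(a,w,b)>0\}$. A word $w\in X^*$ is D1-directing for $\mathcal F$ if there is $c\in A$ with $\mathcal F(a,w)=\{c\}$ for all $a\in A$; D2-directing if $\mathcal F(a,w)=\mathcal F(b,w)$ for all $a,b\in A$; D3-directing if there is $c\in A$ with $c\in\mathcal F(a,w)$ for all $a\in A$. $D_i(\mathcal F)$ is the set of D$i$-directing words, and $\mathcal F$ is D$i$-directable if $D_i(\mathcal F)\neq\emptyset$. A congruence of $\mathcal F$ is an equivalence relation $\theta$ on $A$ such that whenever $a\,\theta\,a'$, then for all $x\in X$ and $b\in A$, $\max\{f(a,x,b')\mid b'\in[b]\}=\max\{f(a',x,b')\mid b'\in[b]\}$, where $[b]$ is the $\theta$-class of $b$. The quotient automaton is $\mathcal F/\theta=(A/\theta,X,f_\theta)$ with $f_\theta([a],x,[b])=\max\{f(a',x,b')\mid a'\in[a],\ b'\in[b]\}$.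 *)

From HB Require Import structures.
From mathcomp Require Import all_boot all_order all_algebra.
Set Implicit Arguments. Unset Strict Implicit. Unset Printing Implicit Defensive.
Import Order.TTheory GRing.Theory Num.Theory.
Local Open Scope ring_scope.

Section FuzzyAutomata.
Variable R : realDomainType.

(* A fuzzy automaton on states S and alphabet X is a transition function
   f : S -> X -> S -> R, with values in [0,1] (stated as a hypothesis). *)
Definition fuzzy_valued (S X : finType) (f : S -> X -> S -> R) :=
  forall a x b, 0 <= f a x b <= 1.

(* max over a finite set; since all values are >= 0, 0 is a neutral start *)
(* extended transition f^*(a, w, b), defined by f^*(a,eps,b) = [a = b],
   f^*(a, v x, b) = max_c min (f^*(a,v,c), f(c,x,b)) *)
Definition fstep (S X : finType) (f : S -> X -> S -> R) (g : S -> R) (x : X) : S -> R :=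
  fun b => \big[Num.max/0]_(c : S) Num.min (g c) (f c x b).

Definition fstar (S X : finType) (f : S -> X -> S -> R) (a : S) (w : seq X) (b : S) : R :=
  foldl (fstep f) (fun b => (a == b)%:R) w b.

Definition freach (S X : finType) (f : S -> X -> S -> R) (a : S) (w : seq X) : {set S} :=
  [set b | 0 < fstar f a w b].

Definition D1_directing (S X : finType) (f : S -> X -> S -> R) (w : seq X) :=
  exists c : S, forall a : S, freach f a w = [set c].
Definition D2_directing (S X : finType) (f : S -> X -> S -> R) (w : seq X) :=
  forall a b : S, freach f a w = freach f b w.
Definition D3_directing (S X : finType) (f : S -> X -> S -> R) (w : seq X) :=
  exists c : S, forall a : S, c \in freach f a w.

Definition Di_directing (i : nat) (S X : finType) (f : S -> X -> S -> R) (w : seq X) :=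
  match i with
  | 1 => D1_directing f w
  | 2 => D2_directing f w
  | 3 => D3_directing f w
  | _ => False
  end.

Definition Di_directable (i : nat) (S X : finType) (f : S -> X -> S -> R) :=
  exists w : seq X, Di_directing i f w.

Definition eqclass (A : finType) (theta : rel A) (a : A) : {set A} := [set b | theta a b].

Definition is_congruence (A X : finType) (f : A -> X -> A -> R) (theta : rel A) :=
  equivalence_rel theta /\
  forall a a', theta a a' -> forall (x : X) (b : A),
    \big[Num.max/0]_(b' in eqclass theta b) f a x b'
    = \big[Num.max/0]_(b' in eqclass theta b) f a' x b'.

Definition qstate (A : finType) (theta : rel A) :=
  {P : {set A} | [exists a, P == eqclass theta a]}.

Definition fquot (A X : finType) (f : A -> X -> A -> R) (theta : rel A)
  (P : qstate theta) (x : X) (Q : qstate theta) : R :=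
  \big[Num.max/0]_(a' in val P) \big[Num.max/0]_(b' in val Q) f a' x b'.

End FuzzyAutomata.
Arguments fquot {R A X} f theta P x Q.

(* The quotient map a |-> [a] sends reachable sets to reachable sets:
   F/theta([a], w) is the image of F(a, w) under the class map.  Only the
   support of a transition matters, and the congruence condition says exactly
   that whether some transition on x from a reaches the class [b] does not
   depend on the representative a.  Each directing property of a word (all
   reachable sets equal a fixed singleton, are all equal, or share a common
   state) is preserved by taking images, and every class is of the form [a]. *)
From HB Require Import structures.
From mathcomp Require Import all_boot all_order all_algebra.
Import Order.TTheory GRing.Theory Num.Theory.
Local Open Scope ring_scope.

Set Implicit Arguments.
Unset Strict Implicit.

Section Supports.
Variable R : realDomainType.

Lemma bigmax_gt0 (I : finType) (P : pred I) (F : I -> R) :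
  (0 < \big[Num.max/0]_(i | P i) F i) = [exists i, P i && (0 < F i)].
Proof.
apply/idP/idP => [|/existsP[i /andP[Pi Fi_gt0]]]; last first.
  exact: lt_le_trans Fi_gt0 (le_bigmax_cond _ _ Pi).
rewrite ltNge; apply: contraNT => /existsPn no_pos.
apply/bigmax_leP; split=> // i Pi.
by move: (no_pos i); rewrite Pi -leNgt.
Qed.

Variables (S X : finType) (f : S -> X -> S -> R).

Lemma freach_nil (a : S) : freach f a [::] = [set a].
Proof. by apply/setP => b; rewrite !inE /fstar /= ltr0n lt0b eq_sym. Qed.

Lemma freach_rcons (a : S) (v : seq X) (x : X) :
  freach f a (rcons v x) = [set b | [exists c in freach f a v, 0 < f c x b]].
Proof.
apply/setP => b; rewrite !inE /fstar foldl_rcons /fstep bigmax_gt0.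
by apply: eq_existsb => c; rewrite inE lt_min.
Qed.

End Supports.

Section Quotient.
Variables (R : realDomainType) (A X : finType) (f : A -> X -> A -> R).
Variable theta : rel A.
Hypothesis congr : is_congruence f theta.

Let theta_refl : reflexive theta.
Proof. by case: congr => /equivalence_relP[]. Qed.

Let theta_ltrans : left_transitive theta.
Proof. by case: congr => /equivalence_relP[]. Qed.

Lemma eqclass_eq (a b : A) : theta a b -> eqclass theta a = eqclass theta b.
Proof. by move=> ab; apply/setP => z; rewrite !inE (theta_ltrans ab). Qed.

Lemma mem_eqclass (a : A) : a \in eqclass theta a.
Proof. by rewrite inE theta_refl. Qed.

Definition qclass (a : A) : qstate theta :=
  exist _ (eqclass theta a) (introT existsP
    (ex_intro (fun a' => eqclass theta a == eqclass theta a') a (eqxx _))).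

Lemma qclass_surj (P : qstate theta) : exists a, P = qclass a.
Proof. by have /existsP[a /eqP valP_eq] := valP P; exists a; apply: val_inj. Qed.

Lemma mem_qclass (b : A) (Q : qstate theta) : (b \in val Q) = (qclass b == Q).
Proof.
have [q ->] := qclass_surj Q; rewrite -val_eqE /=.
apply/idP/eqP => [qb | <-]; last exact: mem_eqclass.
by rewrite inE in qb; rewrite (eqclass_eq qb).
Qed.

Lemma fquot_qclass_gt0 (c : A) (x : X) (Q : qstate theta) :
  (0 < fquot f theta (qclass c) x Q) = [exists b in val Q, 0 < f c x b].
Proof.
have [q ->] := qclass_surj Q; rewrite /fquot bigmax_gt0 /=.
apply/existsP/idP => [[c' /andP[cc' pos]] | pos]; last first.
  by exists c; rewrite mem_eqclass bigmax_gt0.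
rewrite inE in cc'; case: congr => _ /(_ _ _ cc' x q) same_max.
by rewrite -bigmax_gt0 same_max.
Qed.

Lemma freach_fquot (a : A) (w : seq X) :
  freach (fquot f theta) (qclass a) w = qclass @: freach f a w.
Proof.
elim/last_ind: w => [|v x IH]; first by rewrite !freach_nil imset_set1.
rewrite !freach_rcons IH; apply/setP => Q; rewrite inE; apply/existsP/imsetP.
- case=> _ /andP[/imsetP[c cv ->]]; rewrite fquot_qclass_gt0.
  case/existsP=> b /andP[bQ fb]; exists b; last by apply/esym/eqP; rewrite -mem_qclass.
  by rewrite inE; apply/existsP; exists c; rewrite cv fb.
- case=> b; rewrite inE => /existsP[c /andP[cv fb]] ->.
  exists (qclass c); rewrite imset_f //= fquot_qclass_gt0.
  by apply/existsP; exists b; rewrite fb andbT mem_qclass.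
Qed.

Lemma D1_directing_fquot (w : seq X) :
  D1_directing f w -> D1_directing (fquot f theta) w.
Proof.
case=> c reach_c; exists (qclass c) => P; have [a ->] := qclass_surj P.
by rewrite freach_fquot reach_c imset_set1.
Qed.

Lemma D2_directing_fquot (w : seq X) :
  D2_directing f w -> D2_directing (fquot f theta) w.
Proof.
move=> reach_eq P Q; have [a ->] := qclass_surj P; have [b ->] := qclass_surj Q.
by rewrite !freach_fquot (reach_eq a b).
Qed.

Lemma D3_directing_fquot (w : seq X) :
  D3_directing f w -> D3_directing (fquot f theta) w.
Proof.
case=> c reach_c; exists (qclass c) => P; have [a ->] := qclass_surj P.
by rewrite freach_fquot imset_f.
Qed.

Lemma Di_directing_fquot (i : nat) (w : seq X) :
  Di_directing i f w -> Di_directing i (fquot f theta) w.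
Proof.
case: i => [|[|[|[|i]]]]; [by [] | | | | by []].
- exact: D1_directing_fquot.
- exact: D2_directing_fquot.
- exact: D3_directing_fquot.
Qed.

Lemma Di_directable_fquot (i : nat) :
  Di_directable i f -> Di_directable i (fquot f theta).
Proof. by case=> w dir_w; exists w; apply: Di_directing_fquot. Qed.

End Quotient.

Theorem corollary6p5 (R : realDomainType) (A X : finType)
  (f : A -> X -> A -> R) (theta : rel A) :
  (0 < #|A|)%N -> (0 < #|X|)%N ->
  fuzzy_valued f ->
  is_congruence f theta ->
  forall i : nat, i \in [:: 1%N; 2%N; 3%N] ->
    (forall w : seq X, Di_directing i f w -> Di_directing i (fquot f theta) w) /\
    (Di_directable i f -> Di_directable i (fquot f theta)).
Proof.
(* Only supports of transitions matter. *)
move=> _ _ _ congr i _; split.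
- by move=> w; apply: Di_directing_fquot.
- exact: Di_directable_fquot.
Qed.
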